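(* Let $f\in\mathbf{C}\{X,Y\}$ be a nonzero power series without constant term such that the curve $f=0$ is reduced, and let $l\in\mathbf{C}\{X,Y\}$ be a power series without constant term with $\operatorname{ord} l=1$. Let $J(f,l)=\frac{\partial f}{\partial X}\frac{\partial l}{\partial Y}-\frac{\partial f}{\partial Y}\frac{\partial l}{\partial X}$ and assume $J(f,l)(0,0)=0$. Then $l$ does not divide $f$ in $\mathbf{C}\{X,Y\}$ (i.e. $l=0$ is not a branch of $f=0$) if and only if $l$ does not divide $J(f,l)$ (i.e. $l=0$ is not a branch of the curve $J(f,l)=0$).
   Context: $\mathbf{C}\{X,Y\}$ denotes the ring of convergent complex power series in $X,Y$. A curve $f=0$ is reduced if $f$ has no multiple irreducible factors; the branches of $f=0$ are the curves $f_i=0$ for the irreducible factors $f_i$ of $f$. The curve $l=0$ with $\operatorname{ord} l=1$ is called regular. *)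

From mathcomp Require Import all_boot all_algebra complex reals.
Set Implicit Arguments. Unset Strict Implicit. Unset Printing Implicit Defensive.
Import GRing.Theory Num.Theory.
Local Open Scope ring_scope.

Section ConvPS.
Variable R : realType.
Local Notation C := R[i].

(* A formal power series in X,Y : coefficient of X^i Y^j is  s i j. *)
Definition ps := nat -> nat -> C.

(* Convergent: absolutely convergent on some polydisc, i.e. coefficients
   satisfy a Cauchy bound |a_ij| r^(i+j) <= M for some r > 0. *)
Definition ps_conv (s : ps) : Prop :=
  exists r M : C, 0 < r /\ forall i j, `|s i j| * r ^+ (i + j) <= M.

Definition ps_eq (s t : ps) : Prop := forall i j, s i j = t i j.
Definition ps_zero : ps := fun _ _ => 0.
Definition ps_one : ps := fun i j => if (i == 0%N) && (j == 0%N) then 1 else 0.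

Definition ps_mul (s t : ps) : ps := fun i j =>
  \sum_(k < i.+1) \sum_(m < j.+1) s k m * t (i - k)%N (j - m)%N.

Definition ps_sub (s t : ps) : ps := fun i j => s i j - t i j.

Definition ps_dX (s : ps) : ps := fun i j => s i.+1 j *+ i.+1.
Definition ps_dY (s : ps) : ps := fun i j => s i j.+1 *+ j.+1.

Definition jac (f l : ps) : ps :=
  ps_sub (ps_mul (ps_dX f) (ps_dY l)) (ps_mul (ps_dY f) (ps_dX l)).

Definition ps_at0 (s : ps) : C := s 0%N 0%N.

Definition ps_dvd (a b : ps) : Prop := exists g, ps_conv g /\ ps_eq b (ps_mul a g).

Definition ps_unit (a : ps) : Prop := exists g, ps_conv g /\ ps_eq (ps_mul a g) ps_one.

Definition ps_irreducible (p : ps) : Prop :=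
  [/\ ps_conv p, ~ ps_eq p ps_zero, ~ ps_unit p &
      forall a b, ps_conv a -> ps_conv b -> ps_eq p (ps_mul a b) ->
        ps_unit a \/ ps_unit b].

Definition ps_reduced (f : ps) : Prop :=
  forall p, ps_irreducible p -> ~ ps_dvd (ps_mul p p) f.

Definition ps_ord1 (l : ps) : Prop :=
  l 0%N 0%N = 0 /\ (l 1%N 0%N != 0 \/ l 0%N 1%N != 0).

End ConvPS.

(* After exchanging X and Y we may assume l_Y(0) <> 0.  Division by l along Y then
   writes f = l q + r with r in C{X}: the coefficients of q solve a triangular system
   ordered by the weight 2i + j, and a geometric majorant shows that q converges.
   As r does not depend on Y, J(f,l) = l J(q,l) + r' l_Y.  If l divides J(f,l), it
   divides r' l_Y with l_Y a unit, and comparing coefficients forces r' = 0; so r is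
   constant, hence 0 since f(0) = l(0) = 0, and l divides f.  Conversely
   J(l g, l) = l J(g, l). *)

From HB Require Import structures.
From mathcomp Require Import all_boot all_order all_algebra complex reals.
From mathcomp Require Import boolp ring lra zify.
Set Implicit Arguments.
Unset Strict Implicit.
Unset Printing Implicit Defensive.
Import Order.TTheory GRing.Theory Num.Theory.
Local Open Scope ring_scope.

Section PowerSeriesRing.
Variable R : realType.
Local Notation C := R[i].
Local Notation ps := (ps R).

(* The ring laws of the Cauchy product are inherited from [{poly {poly C}}]:
   a coefficient of index (i, j) only depends on the truncations below N > i, j. *)
Definition ps_trunc (N : nat) (s : ps) : {poly {poly C}} :=
  \poly_(i < N) \poly_(j < N) s i j.

Lemma coef_ps_trunc N s i j : (i < N)%N -> (j < N)%N -> ((ps_trunc N s)`_i)`_j = s i j.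
Proof. by move=> hi hj; rewrite /ps_trunc coef_poly hi coef_poly hj. Qed.

Lemma coef_mul_ps (p q : {poly {poly C}}) (s t : ps) i j :
  (forall k m, (k <= i)%N -> (m <= j)%N -> (p`_k)`_m = s k m) ->
  (forall k m, (k <= i)%N -> (m <= j)%N -> (q`_k)`_m = t k m) ->
  ((p * q)`_i)`_j = ps_mul s t i j.
Proof.
move=> hp hq; rewrite coefM coef_sum; apply: eq_bigr => k _.
rewrite coefM; apply: eq_bigr => m _.
have hk : (k <= i)%N by rewrite -ltnS.
have hm : (m <= j)%N by rewrite -ltnS.
by rewrite hp // hq // leq_subr.
Qed.

Lemma coef_ps_trunc_mul N s t i j : (i < N)%N -> (j < N)%N ->
  ((ps_trunc N s * ps_trunc N t)`_i)`_j = ps_mul s t i j.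
Proof. by move=> hi hj; apply: coef_mul_ps => k m hk hm; apply: coef_ps_trunc; lia. Qed.

Definition ps_add (s t : ps) : ps := fun i j => s i j + t i j.
Definition ps_opp (s : ps) : ps := fun i j => - s i j.

Lemma ps_addA : associative ps_add.
Proof. by move=> a b c; apply/funext => i; apply/funext => j; rewrite /ps_add addrA. Qed.

Lemma ps_addC : commutative ps_add.
Proof. by move=> a b; apply/funext => i; apply/funext => j; rewrite /ps_add addrC. Qed.

Lemma ps_add0 : left_id (ps_zero R) ps_add.
Proof. by move=> a; apply/funext => i; apply/funext => j; rewrite /ps_add add0r. Qed.

Lemma ps_addN : left_inverse (ps_zero R) ps_opp ps_add.
Proof. by move=> a; apply/funext => i; apply/funext => j; rewrite /ps_add addNr. Qed.

Lemma ps_mulA : associative (@ps_mul R).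
Proof.
move=> s t u; apply/funext => i; apply/funext => j.
have [hi hj] : (i < (i + j).+1)%N /\ (j < (i + j).+1)%N by lia.
set N := (i + j).+1.
rewrite -(coef_mul_ps (p := ps_trunc N s) (q := ps_trunc N t * ps_trunc N u)).
- rewrite mulrA; apply: coef_mul_ps => k m hk hm;
    [apply: coef_ps_trunc_mul | apply: coef_ps_trunc]; lia.
- by move=> k m hk hm; apply: coef_ps_trunc; lia.
- by move=> k m hk hm; apply: coef_ps_trunc_mul; lia.
Qed.

Lemma ps_mulC : commutative (@ps_mul R).
Proof.
move=> s t; apply/funext => i; apply/funext => j.
have [hi hj] : (i < (i + j).+1)%N /\ (j < (i + j).+1)%N by lia.
by rewrite -(coef_ps_trunc_mul s t hi hj) -(coef_ps_trunc_mul t s hi hj) mulrC.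
Qed.

Lemma ps_mul1 : left_id (ps_one R) (@ps_mul R).
Proof.
move=> s; apply/funext => i; apply/funext => j.
rewrite /ps_mul big_ord_recl big_ord_recl /ps_one /= mul1r !subn0.
by rewrite !big1 ?addr0 // => [k _|m _]; rewrite ?big1 // => *; rewrite mul0r.
Qed.

Lemma ps_mulDl : left_distributive (@ps_mul R) ps_add.
Proof.
move=> s t u; apply/funext => i; apply/funext => j.
have [hi hj] : (i < (i + j).+1)%N /\ (j < (i + j).+1)%N by lia.
set N := (i + j).+1.
rewrite -(coef_mul_ps (p := ps_trunc N s + ps_trunc N t) (q := ps_trunc N u)).
- by rewrite mulrDl !coefD !coef_ps_trunc_mul.
- by move=> k m hk hm; rewrite !coefD !coef_ps_trunc //; lia.
- by move=> k m hk hm; apply: coef_ps_trunc; lia.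
Qed.

Lemma ps_one_neq0 : ps_one R != ps_zero R.
Proof.
by apply/eqP => /(congr1 (fun s => s 0%N 0%N)) /eqP; rewrite /ps_one oner_eq0.
Qed.

End PowerSeriesRing.

HB.instance Definition _ (R : realType) := gen_eqMixin (ps R).
HB.instance Definition _ (R : realType) := gen_choiceMixin (ps R).
HB.instance Definition _ (R : realType) :=
  GRing.isZmodule.Build (ps R) (@ps_addA R) (@ps_addC R) (@ps_add0 R) (@ps_addN R).
HB.instance Definition _ (R : realType) :=
  GRing.Zmodule_isComNzRing.Build (ps R)
    (@ps_mulA R) (@ps_mulC R) (@ps_mul1 R) (@ps_mulDl R) (@ps_one_neq0 R).

Section Derivations.
Variable R : realType.
Local Notation ps := (ps R).
Implicit Types s t f l q : ps.

Lemma ps_mulE s t : ps_mul s t = s * t. Proof. by []. Qed.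
Lemma ps_addE s t i j : (s + t) i j = s i j + t i j. Proof. by []. Qed.
Lemma ps_oppE s i j : (- s) i j = - s i j. Proof. by []. Qed.
Lemma ps0E i j : (0 : ps) i j = 0. Proof. by []. Qed.

Lemma ps_eqP s t : ps_eq s t <-> s = t.
Proof. by split=> [h|-> //]; apply/funext => i; apply/funext => j; apply: h. Qed.

Definition ps_swap s : ps := fun i j => s j i.

Lemma ps_swapD s t : ps_swap (s + t) = ps_swap s + ps_swap t. Proof. by []. Qed.

Lemma ps_swapN s : ps_swap (- s) = - ps_swap s. Proof. by []. Qed.

Lemma ps_swapM s t : ps_swap (s * t) = ps_swap s * ps_swap t.
Proof.
by apply/funext => i; apply/funext => j; rewrite /ps_swap -!ps_mulE /ps_mul exchange_big.
Qed.

Lemma ps_dY_swap s : ps_dY s = ps_swap (ps_dX (ps_swap s)). Proof. by []. Qed.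

Lemma ps_dXD s t : ps_dX (s + t) = ps_dX s + ps_dX t.
Proof. by apply/funext => i; apply/funext => j; rewrite /ps_dX !ps_addE mulrnDl. Qed.

Lemma ps_dYD s t : ps_dY (s + t) = ps_dY s + ps_dY t.
Proof. by rewrite !ps_dY_swap ps_dXD. Qed.

Lemma ps_dXM s t : ps_dX (s * t) = ps_dX s * t + s * ps_dX t.
Proof.
apply/funext => i; apply/funext => j.
set N := (i + j).+2.
have trunc_dX (u : ps) k m : (k <= i)%N -> (m <= j)%N ->
    (((ps_trunc N u)^`())`_k)`_m = ps_dX u k m.
  by move=> hk hm; rewrite coef_deriv coefMn coef_ps_trunc //; lia.
have trunc_id (u : ps) k m : (k <= i)%N -> (m <= j)%N -> ((ps_trunc N u)`_k)`_m = u k m.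
  by move=> hk hm; apply: coef_ps_trunc; lia.
have coef_deriv2 (p : {poly {poly R[i]}}) k m : (p`_k.+1)`_m *+ k.+1 = (p^`()`_k)`_m.
  by rewrite coef_deriv coefMn.
rewrite /ps_dX -ps_mulE -(@coef_ps_trunc_mul _ N) ?coef_deriv2; try lia.
rewrite derivM ps_addE !coefD.
by rewrite !(coef_mul_ps (trunc_dX _) (trunc_id _)) !(coef_mul_ps (trunc_id _) (trunc_dX _)).
Qed.

Lemma ps_dYM s t : ps_dY (s * t) = ps_dY s * t + s * ps_dY t.
Proof. by rewrite !ps_dY_swap ps_swapM ps_dXM ps_swapD !ps_swapM. Qed.

Lemma jacE f l : jac f l = ps_dX f * ps_dY l - ps_dY f * ps_dX l.
Proof. by []. Qed.

Lemma jacDl f g l : jac (f + g) l = jac f l + jac g l.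
Proof. by rewrite !jacE ps_dXD ps_dYD; ring. Qed.

Lemma jac_mull l q : jac (l * q) l = l * jac q l.
Proof. by rewrite !jacE ps_dXM ps_dYM; ring. Qed.

Lemma jac_swap f l : jac (ps_swap f) (ps_swap l) = - ps_swap (jac f l).
Proof.
have -> : jac (ps_swap f) (ps_swap l) =
    ps_swap (ps_dY f) * ps_swap (ps_dX l) - ps_swap (ps_dX f) * ps_swap (ps_dY l) by [].
rewrite -(ps_swapM (ps_dY f)) -(ps_swapM (ps_dX f)) jacE.
by rewrite (ps_swapD (ps_dX f * ps_dY l)) ps_swapN opprB.
Qed.

End Derivations.

Section GeometricSums.
Variable R : realFieldType.

Lemma natrS_le_exp2 n : (n.+1)%:R <= (2 : R) ^+ n.
Proof. by rewrite -natrX ler_nat; apply: ltn_expl. Qed.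

Lemma sum_halfX_le n : \sum_(k < n) (2^-1 : R) ^+ k <= 2.
Proof.
have sum_halfX p : \sum_(k < p) (2^-1 : R) ^+ k = 2 - 2 * 2^-1 ^+ p.
  elim: p => [|p IHp]; first by rewrite big_ord0 expr0; ring.
  by rewrite big_ord_recr /= IHp exprS mulrA divff ?pnatr_eq0 //; ring.
have : 0 <= (2^-1 : R) ^+ n by rewrite exprn_ge0 ?invr_ge0.
by rewrite sum_halfX; lra.
Qed.

Lemma sum2_halfX_le a c : \sum_(k < a) \sum_(m < c) (2^-1 : R) ^+ (k + m) <= 4.
Proof.
apply: (@le_trans _ _ (\sum_(k < a) (2^-1 : R) ^+ k * 2)).
  apply: ler_sum => k _; under eq_bigr do rewrite exprD.
  by rewrite -mulr_sumr ler_wpM2l ?exprn_ge0 ?invr_ge0 ?sum_halfX_le.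
by rewrite -mulr_suml; have := sum_halfX_le a; lra.
Qed.

(* The estimate behind the recursion for the quotient: a coefficient [l k m] with
   [k > 0] or [m > 1] costs [K ^ (k + m)], while the weight drops by [2k + m - 1]. *)
Lemma weight_growth_le (K S : R) k m : 1 <= K -> 2 * K <= S -> (0 < k \/ 1 < m)%N ->
  (2 * K) ^+ (k + m) * S <= 4 * K ^+ 2 * S ^+ (2 * k + m - 1).
Proof.
move=> hK hS hkm.
have S1 : 1 <= S by lra.
have hp n : (2 * K) ^+ n <= S ^+ n by apply: lerXn2r; rewrite ?nnegrE; lra.
have hp0 n : 0 <= (2 * K) ^+ n by apply: exprn_ge0; lra.
have hs0 n : 0 <= S ^+ n by apply: exprn_ge0; lra.
have K2 : 0 <= 4 * K ^+ 2 by rewrite mulr_ge0 ?exprn_ge0 //; lra.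
case: k hkm => [|k] hkm.
  case: m hkm => [|[|m]] hkm; [by case: hkm | by case: hkm |].
  have -> : (2 * 0 + m.+2 - 1 = m.+1)%N by lia.
  have -> : (2 * K) ^+ (0 + m.+2) * S = 4 * K ^+ 2 * ((2 * K) ^+ m * S).
    by rewrite add0n !exprS; ring.
  apply: ler_wpM2l => //; rewrite exprS mulrC.
  by apply: ler_wpM2l; [lra | exact: hp].
have -> : (2 * k.+1 + m - 1 = (2 * k + m).+1)%N by lia.
have -> : (2 * K) ^+ (k.+1 + m) * S = (2 * K) ^+ (k + m) * (2 * K * S).
  by rewrite addSn exprS; ring.
have -> : 4 * K ^+ 2 * S ^+ (2 * k + m).+1 = S ^+ (2 * k + m) * (4 * K ^+ 2 * S).
  by rewrite [S ^+ _.+1]exprS; ring.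
apply: ler_pM; rewrite ?mulr_ge0 //; try lra.
  by apply: le_trans (hp _) _; apply: ler_weXn2l => //; lia.
by apply: ler_wpM2r; nra.
Qed.

End GeometricSums.

Local Notation normc := ComplexField.Normc.normc.

Section Majorants.
Variable R : realType.
Local Notation ps := (ps R).
Implicit Types (s t : ps) (K M : R).

Lemma normc_ge0 (z : R[i]) : 0 <= normc z.
Proof. by case: z => a b; apply: sqrtr_ge0. Qed.

Lemma normc_sum_le n (F : 'I_n -> R[i]) (G : 'I_n -> R) :
  (forall k, normc (F k) <= G k) -> normc (\sum_(k < n) F k) <= \sum_(k < n) G k.
Proof.
move=> hFG; elim/big_rec2: _ => [|k y z _ hyz]; first by rewrite ComplexField.Normc.normc0.
by apply: le_trans (le_normcD _ _) _; apply: lerD.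
Qed.

Definition majorized s K M := forall i j, normc (s i j) <= M * K ^+ (i + j).

Definition geom_majorized s := exists K M, [/\ 1 <= K, 0 <= M & majorized s K M].

Lemma majorized_mono s K M K' M' : 1 <= K -> 0 <= M -> K <= K' -> M <= M' ->
  majorized s K M -> majorized s K' M'.
Proof.
move=> hK hM hKK hMM hs i j; apply: le_trans (hs i j) _.
apply: ler_pM => //; first by apply: exprn_ge0; lra.
by apply: lerXn2r => //; rewrite nnegrE; lra.
Qed.

Lemma geom_majorized2 s t : geom_majorized s -> geom_majorized t ->
  exists K M, [/\ 1 <= K, 0 <= M, majorized s K M & majorized t K M].
Proof.
case=> [K1 [M1 [hK1 hM1 hs]]] [K2 [M2 [hK2 hM2 ht]]].
exists (K1 + K2), (M1 + M2); split; try lra.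
  by apply: (majorized_mono _ _ _ _ hs); lra.
by apply: (majorized_mono _ _ _ _ ht); lra.
Qed.

(* [ps_conv] bounds the coefficients by [M / r ^ (i + j)] inside [C]; with
   [r > 0] real this is a real geometric majorant of ratio [1 + 1 / r]. *)
Lemma ps_convP s : ps_conv s <-> geom_majorized s.
Proof.
split=> [[[r ri] [[M Mi] [/= hr hs]]]|[K [M [hK hM hs]]]].
  move: hr; rewrite ltcE /= => /andP[/eqP ri0 hr]; subst ri.
  have hsM i j : normc (s i j) * r ^+ (i + j) <= M.
    have normcE (z : R[i]) : `|z| = (normc z)%:C%C by [].
    by move: (hs i j); rewrite normcE complexr0 -rmorphXn -rmorphM lecE /= => /andP[].
  have M0 : 0 <= M by apply: le_trans (hsM 0%N 0%N); rewrite mulr1 normc_ge0.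
  have rV0 : 0 < r^-1 by rewrite invr_gt0.
  exists (1 + r^-1), M; split=> //; first lra.
  move=> i j; have hsMr : normc (s i j) <= M / r ^+ (i + j).
    by rewrite ler_pdivlMr ?exprn_gt0.
  apply: le_trans hsMr _; rewrite -exprVn; apply: ler_wpM2l => //.
  by apply: lerXn2r; rewrite ?nnegrE; lra.
have K0 : 0 < K by lra.
exists (K^-1)%:C%C, M%:C%C; split; first by rewrite ltcR invr_gt0.
move=> i j; rewrite -rmorphXn -rmorphM lecR exprVn.
by rewrite ler_pdivrMr ?exprn_gt0.
Qed.

Lemma geom_majorizedD s t :
  geom_majorized s -> geom_majorized t -> geom_majorized (s + t).
Proof.
move=> hs ht; have [K [M [hK hM bs bt]]] := geom_majorized2 hs ht.
exists K, (M + M); split; try lra.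
by move=> i j; apply: le_trans (le_normcD _ _) _; rewrite mulrDl lerD.
Qed.

Lemma geom_majorizedN s : geom_majorized s -> geom_majorized (- s).
Proof. by case=> K [M [hK hM hs]]; exists K, M; split=> // i j; rewrite ps_oppE normcN. Qed.

Lemma geom_majorized_swap s : geom_majorized s -> geom_majorized (ps_swap s).
Proof. by case=> K [M [hK hM hs]]; exists K, M; split=> // i j; rewrite /ps_swap addnC. Qed.

Lemma geom_majorizedM s t :
  geom_majorized s -> geom_majorized t -> geom_majorized (s * t).
Proof.
move=> hs ht; have [K [M [hK hM bs bt]]] := geom_majorized2 hs ht.
have MK0 n : 0 <= M * M * K ^+ n by rewrite !mulr_ge0 ?exprn_ge0 //; lra.
exists (2 * K), (M * M); split; [lra | exact: mulr_ge0 |] => i j.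
apply: (@le_trans _ _ (\sum_(k < i.+1) \sum_(m < j.+1) M * M * K ^+ (i + j))).
  apply: normc_sum_le => k; apply: normc_sum_le => m.
  have [hk hm] : (k <= i)%N /\ (m <= j)%N by split; rewrite -ltnS.
  have -> : M * M * K ^+ (i + j) = M * K ^+ (k + m) * (M * K ^+ (i - k + (j - m))).
    by rewrite mulrACA -exprD; congr (_ * _ ^+ _); lia.
  by rewrite ComplexField.Normc.normcM ler_pM ?normc_ge0.
rewrite !sumr_const !card_ord -mulrnA exprMn -(mulr_natr (M * M * _)).
rewrite [_ ^+ _ * K ^+ _]mulrC mulrA.
apply: ler_wpM2l; first exact: MK0.
by rewrite natrM exprD mulrC ler_pM ?ler0n ?natrS_le_exp2.
Qed.

Lemma geom_majorized_dX s : geom_majorized s -> geom_majorized (ps_dX s).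
Proof.
case=> K [M [hK hM hs]]; exists (2 * K), (M * K); split; [lra | nra |] => i j.
have exp2_le : (2 : R) ^+ i <= 2 ^+ (i + j) by apply: ler_weXn2l; rewrite ?leq_addr //; lra.
have MK0 : 0 <= M * K * K ^+ (i + j) by rewrite !mulr_ge0 ?exprn_ge0 //; lra.
have -> : M * K * (2 * K) ^+ (i + j) = M * K * K ^+ (i + j) * 2 ^+ (i + j).
  by rewrite exprMn; ring.
rewrite /ps_dX normcMn -(mulr_natr (normc _)).
apply: ler_pM; rewrite ?normc_ge0 ?ler0n //; last exact: le_trans (natrS_le_exp2 _ _) exp2_le.
by apply: le_trans (hs _ _) _; rewrite addSn exprS mulrA.
Qed.

Lemma geom_majorized_dY s : geom_majorized s -> geom_majorized (ps_dY s).
Proof.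
move=> hs; rewrite ps_dY_swap.
exact/geom_majorized_swap/geom_majorized_dX/geom_majorized_swap.
Qed.

Lemma geom_majorized_jac f l :
  geom_majorized f -> geom_majorized l -> geom_majorized (jac f l).
Proof.
move=> hf hl; rewrite jacE.
by apply/geom_majorizedD/geom_majorizedN; apply: geom_majorizedM;
  by [apply: geom_majorized_dX | apply: geom_majorized_dY].
Qed.
End Majorants.

Section RegularInY.
Variable R : realType.
Local Notation ps := (ps R).
Variable l : ps.
Hypothesis l00 : l 0%N 0%N = 0.
Hypothesis lY0 : l 0%N 1%N != 0.
Local Notation b := (l 0%N 1%N).

Definition lq_tail (q : ps) i j := \sum_(k < i.+1) \sum_(m < j.+2)
  (if ((k : nat) == 0%N) && (m <= 1)%N then 0 else l k m * q (i - k)%N (j.+1 - m)%N).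

Lemma coef_mul_tail q i j : ps_mul l q i j.+1 = b * q i j + lq_tail q i j.
Proof.
by rewrite /ps_mul /lq_tail !big_ord_recl /= l00 mul0r !add0r subn0 subSS subn0 addrA.
Qed.

Lemma lq_tail_eq q q' i j :
  (forall i' j', (i' <= i)%N -> (2 * i' + j' < 2 * i + j)%N -> q i' j' = q' i' j') ->
  lq_tail q i j = lq_tail q' i j.
Proof.
move=> hqq'; apply: eq_bigr => k _; apply: eq_bigr => m _.
case: ifP => // /negbT hkm; congr (_ * _).
have [hk hm] : (k <= i)%N /\ (m <= j.+1)%N by split; rewrite -ltnS.
apply: hqq'; first exact: leq_subr.
by move: hkm; rewrite negb_and -ltnNge -lt0n; case/orP; lia.
Qed.

Lemma lq_tail0 i j : lq_tail 0 i j = 0.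
Proof. by apply: big1 => k _; apply: big1 => m _; case: ifP; rewrite // ps0E mulr0. Qed.

(* Columns [i] are treated in increasing order: first [s i 0], then all [u i j]. *)
Lemma Xseries_eq0 (u s e : ps) : e 0%N 0%N != 0 -> (forall i j, s i j.+1 = 0) ->
  l * u = s * e -> s = 0.
Proof.
move=> e0 sX lu_se.
suff col_eq0 i : s i 0%N = 0 /\ forall j, u i j = 0.
  by apply/funext => i; apply/funext => -[|j]; [case: (col_eq0 i) | rewrite sX].
elim/ltn_ind: i => i IHi.
have s_lt k : (k < i)%N -> s k 0%N = 0 by case/IHi.
have u_lt k j : (k < i)%N -> u k j = 0 by case/IHi => _ ->.
have coef_se j : (s * e) i j = s i 0%N * e 0%N j.
  rewrite -ps_mulE /ps_mul big_ord_recr big_ord_recl /= subnn subn0.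
  rewrite [X in _ * _ + X]big1 ?addr0 => [|m _]; last by rewrite sX mul0r.
  rewrite big1 ?add0r // => k _; rewrite big_ord_recl s_lt ?mul0r ?add0r ?ltn_ord //.
  by apply: big1 => m _; rewrite sX mul0r.
have si0 : s i 0%N = 0.
  have : (l * u) i 0%N = 0.
    rewrite -ps_mulE /ps_mul; apply: big1 => -[[|k] hk] _; rewrite big_ord1 /=.
      by rewrite l00 mul0r.
    by rewrite u_lt ?mulr0 //; lia.
  by rewrite lu_se coef_se => /eqP; rewrite mulf_eq0 (negbTE e0) orbF => /eqP.
split=> // j; elim/ltn_ind: j => j IHj.
have := congr1 (fun p : ps => p i j.+1) lu_se.
rewrite /= -ps_mulE coef_mul_tail (lq_tail_eq (q' := 0 : ps)) ?lq_tail0 ?addr0; last first.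
  move=> i' j'; rewrite leq_eqVlt => /orP[/eqP -> lt_j|/u_lt -> //]; rewrite IHj //; lia.
by rewrite coef_se si0 mul0r => /eqP; rewrite mulf_eq0 (negbTE lY0) => /eqP.
Qed.

Lemma normc_lY0_gt0 : 0 < normc b.
Proof.
rewrite lt_def normc_ge0 andbT.
by apply: contra lY0 => /eqP/ComplexField.Normc.eq0_normc ->.
Qed.

Section Quotient.
Variable f : ps.

Definition quot_step (q : ps) : ps := fun i j => (f i j.+1 - lq_tail q i j) / b.

(* [quot_iter n] is correct at all weights below [n], so the diagonal [quot] solves
   the triangular system [f i j.+1 = (l * q) i j.+1]. *)
Fixpoint quot_iter (n : nat) : ps :=
  if n is n'.+1 then quot_step (quot_iter n') else ps_zero R.

Definition quot : ps := fun i j => quot_iter (2 * i + j).+1 i j.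

Lemma quot_iterS n i j : (2 * i + j < n)%N -> quot_iter n.+1 i j = quot_iter n i j.
Proof.
elim: n i j => [//|n IHn] i j hn.
rewrite [quot_iter n.+2]/= /quot_step (lq_tail_eq (q' := quot_iter n)) //.
by move=> i' j' _ h; apply: IHn; lia.
Qed.

Lemma quot_iterE n i j : (2 * i + j < n)%N -> quot_iter n i j = quot i j.
Proof.
move=> hn; rewrite /quot -(subnKC hn).
elim: (n - _)%N => [|d IHd]; first by rewrite addn0.
by rewrite addnS quot_iterS // ltn_addr.
Qed.

Lemma coef_mul_quot i j : f i j.+1 = ps_mul l quot i j.+1.
Proof.
rewrite coef_mul_tail; have -> : quot i j = (f i j.+1 - lq_tail quot i j) / b.
  rewrite {1}/quot [quot_iter _]/= /quot_step (lq_tail_eq (q' := quot)) //.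
  by move=> i' j' _ /quot_iterE.
by field.
Qed.

Section QuotientBound.
Variables K M : R.
Hypotheses (hK : 1 <= K) (hM : 0 <= M) (hl : majorized l K M) (hf : majorized f K M).
Local Notation nb := (normc b).
Local Notation half := (2^-1 : R).

(* [quot_step] maps the majorant [quot_amp * quot_rate ^ (2i + j)] into itself. *)
Definition quot_rate := 2 * K + 32 * M * K ^+ 2 / nb.
Definition quot_amp := 2 * M * quot_rate / nb.
Local Notation S := quot_rate.
Local Notation A := quot_amp.

Lemma quot_rate_ge : 2 * K <= S /\ 32 * M * K ^+ 2 <= nb * S.
Proof.
move: (hK) (hM) (normc_lY0_gt0) => hK1 hM1 nb0.
have MK0 : 0 <= 32 * M * K ^+ 2 by rewrite !mulr_ge0 ?exprn_ge0 //; lra.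
rewrite /quot_rate; split; first by rewrite lerDl divr_ge0 // ltW.
rewrite mulrDr [nb * (_ / nb)]mulrC divfK ?gt_eqF // lerDr mulr_ge0 //; lra.
Qed.

Lemma quot_amp_ge0 : 0 <= A.
Proof.
move: (hK) (hM) => hK1 hM1; have [hS _] := quot_rate_ge.
apply: divr_ge0; last exact/ltW/normc_lY0_gt0.
by apply: mulr_ge0; lra.
Qed.

Lemma quot_ampE : A * nb = 2 * M * S.
Proof. by rewrite mulfVK // gt_eqF // normc_lY0_gt0. Qed.

Lemma tail_term_le (q : ps) i j k m :
  (forall i j, normc (q i j) <= A * S ^+ (2 * i + j)) ->
  (k <= i)%N -> (m <= j.+1)%N -> (0 < k \/ 1 < m)%N ->
  normc (l k m * q (i - k)%N (j.+1 - m)%N) * S <=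
    4 * M * A * K ^+ 2 * S ^+ (2 * i + j) * half ^+ (k + m).
Proof.
move: (hK) (hM) => hK1 hM1 hq hk hm hkm.
have [hS _] := quot_rate_ge; have A0 := quot_amp_ge0.
set e := (2 * (i - k) + (j.+1 - m))%N.
rewrite ComplexField.Normc.normcM.
apply: (@le_trans _ _ (M * K ^+ (k + m) * (A * S ^+ e) * S)).
  by apply: ler_wpM2r; [lra | apply: ler_pM; rewrite ?normc_ge0 ?hl ?hq].
have -> : K ^+ (k + m) = (2 * K) ^+ (k + m) * half ^+ (k + m).
  by rewrite -exprMn; congr (_ ^+ _); field.
have -> : S ^+ (2 * i + j) = S ^+ e * S ^+ (2 * k + m - 1).
  by rewrite -exprD; congr (_ ^+ _); rewrite /e; lia.
have -> : M * ((2 * K) ^+ (k + m) * half ^+ (k + m)) * (A * S ^+ e) * S =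
  (M * A * S ^+ e * half ^+ (k + m)) * ((2 * K) ^+ (k + m) * S) by ring.
have -> : 4 * M * A * K ^+ 2 * (S ^+ e * S ^+ (2 * k + m - 1)) * half ^+ (k + m) =
  (M * A * S ^+ e * half ^+ (k + m)) * (4 * K ^+ 2 * S ^+ (2 * k + m - 1)) by ring.
apply: ler_wpM2l; last exact: weight_growth_le.
have S0 : 0 <= S by lra.
by rewrite !mulr_ge0 ?exprn_ge0 ?invr_ge0 ?normc_ge0.
Qed.

Lemma lq_tail_le (q : ps) i j :
  (forall i j, normc (q i j) <= A * S ^+ (2 * i + j)) ->
  normc (lq_tail q i j) * S <= 16 * M * A * K ^+ 2 * S ^+ (2 * i + j).
Proof.
move: (hK) (hM) => hK1 hM1 hq.
have [hS _] := quot_rate_ge; have A0 := quot_amp_ge0; have S0 : 0 < S by lra.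
set D := 4 * M * A * K ^+ 2 * S ^+ (2 * i + j).
have D0 : 0 <= D.
  apply: mulr_ge0; last by rewrite exprn_ge0 ?ltW.
  by apply: mulr_ge0; [apply: mulr_ge0 => //; lra | exact: sqr_ge0].
rewrite -ler_pdivlMr // (_ : _ / S = D / S * 4); last by rewrite /D; field; rewrite gt_eqF.
apply: le_trans (_ : _ <= \sum_(k < i.+1) \sum_(m < j.+2) D / S * half ^+ (k + m)) _.
  apply: normc_sum_le => k; apply: normc_sum_le => m.
  case: ifP => [_|/negbT hkm].
    rewrite ComplexField.Normc.normc0; apply: mulr_ge0; first exact: divr_ge0 D0 (ltW S0).
    by rewrite exprn_ge0 // invr_ge0 ler0n.
  rewrite mulrAC ler_pdivlMr // /D.
  apply: (tail_term_le hq); [by rewrite -ltnS | by rewrite -ltnS |].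
  by apply/orP; move: hkm; rewrite negb_and -ltnNge -lt0n.
under eq_bigr do rewrite -mulr_sumr.
by rewrite -mulr_sumr; apply: ler_wpM2l; [exact: divr_ge0 D0 (ltW S0) | exact: sum2_halfX_le].
Qed.

Lemma quot_iter_le n i j : normc (quot_iter n i j) <= A * S ^+ (2 * i + j).
Proof.
move: (hK) (hM) => hK1 hM1.
have [hS hSb] := quot_rate_ge; have A0 := quot_amp_ge0; have nb0 := normc_lY0_gt0.
have S0 : 0 < S by lra.
elim: n i j => [|n IHn] i j.
  by rewrite ComplexField.Normc.normc0; apply: mulr_ge0 A0 (exprn_ge0 _ (ltW S0)).
rewrite [quot_iter _]/= /quot_step ComplexField.Normc.normcM ComplexField.Normc.normcV.
rewrite ler_pdivrMr // mulrAC quot_ampE.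
set X := S ^+ (2 * i + j).
have X0 : 0 <= X by rewrite exprn_ge0 ?ltW.
have f_le : normc (f i j.+1) <= M * S * X.
  apply: le_trans (hf i j.+1) _; rewrite /X -mulrA -exprS; apply: ler_wpM2l => //.
  apply: le_trans (_ : _ <= S ^+ (i + j.+1)) _; first by apply: lerXn2r; rewrite ?nnegrE; lra.
  by apply: ler_weXn2l; [lra | lia].
have tail_le : normc (lq_tail (quot_iter n) i j) <= M * S * X.
  rewrite -[_ <= M * S * X](ler_pM2r S0); apply: le_trans (lq_tail_le i j IHn) _.
  have -> : M * S * X * S = A * X * (nb * S / 2).
    by rewrite !mulrA [A * X * nb]mulrAC quot_ampE; field.
  have -> : 16 * M * A * K ^+ 2 * X = A * X * (32 * M * K ^+ 2 / 2) by field.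
  by apply: ler_wpM2l; [exact: mulr_ge0 | rewrite ler_pM2r // invr_gt0 ltr0n].
apply: le_trans (le_normcD _ _) _; rewrite normcN; lra.
Qed.

Lemma geom_majorized_quot : geom_majorized quot.
Proof.
move: (hK) (hM) => hK1 hM1; have [hS _] := quot_rate_ge; have A0 := quot_amp_ge0.
exists (S ^+ 2), A; split => //; first by rewrite expr2; nra.
move=> i j; apply: le_trans (quot_iter_le _ _ _) _.
by rewrite -exprM; apply: ler_wpM2l => //; apply: ler_weXn2l; [lra | lia].
Qed.

End QuotientBound.

Lemma ps_divY : geom_majorized l -> geom_majorized f ->
  exists2 q, geom_majorized q & forall i j, (f - l * q) i j.+1 = 0.
Proof.
move=> hl hf; have [K [M [hK hM hlKM hfKM]]] := geom_majorized2 hl hf.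
exists quot; first exact: (geom_majorized_quot hK hM hlKM hfKM).
by move=> i j; rewrite ps_addE ps_oppE coef_mul_quot subrr.
Qed.

End Quotient.
End RegularInY.

Section JacobianCriterion.
Variable R : realType.
Local Notation ps := (ps R).
Implicit Types f l : ps.

Lemma ps_dvd_jac f l : ps_conv l -> ps_dvd l f -> ps_dvd l (jac f l).
Proof.
move=> /ps_convP hl [g [/ps_convP hg /ps_eqP ->]].
exists (jac g l); split; first exact/ps_convP/geom_majorized_jac.
by apply/ps_eqP; rewrite ps_mulE jac_mull.
Qed.

Lemma ps_dvd_of_dvd_jac f l : ps_conv f -> ps_at0 f = 0 -> ps_conv l ->
  l 0%N 0%N = 0 -> l 0%N 1%N != 0 -> ps_dvd l (jac f l) -> ps_dvd l f.
Proof.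
move=> /ps_convP hf f00 /ps_convP hl l00 lY0 [k [_ /ps_eqP]]; rewrite ps_mulE => jac_lk.
have [q hq rY0] := ps_divY l00 lY0 hl hf.
set r := f - l * q in rY0 *.
have dYr : ps_dY r = 0 by apply/funext => i; apply/funext => j; rewrite /ps_dY rY0 mul0rn.
have jac_r : jac r l = ps_dX r * ps_dY l by rewrite jacE dYr mul0r subr0.
have jac_f : jac f l = l * jac q l + ps_dX r * ps_dY l.
  by rewrite -jac_r -jac_mull -jacDl /r addrC subrK.
have lk : l * (k - jac q l) = ps_dX r * ps_dY l.
  by rewrite mulrBr -jac_lk jac_f addrC addKr.
have dXr : ps_dX r = 0.
  apply: (Xseries_eq0 l00 lY0 _ _ lk) => [|i j]; first by rewrite /ps_dY mulr1n.
  by rewrite /ps_dX rY0 mul0rn.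
have r0 : r = 0.
  apply/funext => -[|i]; apply/funext => -[|j]; rewrite ps0E ?rY0 //.
    by rewrite /r ps_addE ps_oppE -ps_mulE /ps_mul !big_ord1 l00 mul0r subr0.
  by have /eqP := congr1 (fun p : ps => p i 0%N) dXr; rewrite /ps_dX mulrn_eq0 => /eqP.
exists q; split; first exact/ps_convP.
by apply/ps_eqP; apply/eqP; rewrite -subr_eq0 -/r r0.
Qed.

Lemma ps_dvdN l f : ps_dvd l (- f) <-> ps_dvd l f.
Proof.
suff dvdN g : ps_dvd l g -> ps_dvd l (- g) by split=> /dvdN; rewrite ?opprK.
case=> h [/ps_convP hh /ps_eqP ->]; exists (- h).
by split; [apply/ps_convP/geom_majorizedN | apply/ps_eqP; rewrite !ps_mulE mulrN].
Qed.

Lemma ps_dvd_swap l f : ps_dvd (ps_swap l) (ps_swap f) <-> ps_dvd l f.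
Proof.
suff dvd_swap l' f' : ps_dvd l' f' -> ps_dvd (ps_swap l') (ps_swap f') by split=> /dvd_swap.
case=> h [/ps_convP hh /ps_eqP ->]; exists (ps_swap h).
by split; [apply/ps_convP/geom_majorized_swap | apply/ps_eqP; rewrite !ps_mulE ps_swapM].
Qed.

Lemma ps_dvd_jacP f l : ps_conv f -> ps_at0 f = 0 -> ps_conv l -> ps_ord1 l ->
  ps_dvd l f <-> ps_dvd l (jac f l).
Proof.
move=> hf f00 hl [l00 [lX0|lY0]]; last first.
  by split; [apply: ps_dvd_jac | apply: ps_dvd_of_dvd_jac].
have hf' : ps_conv (ps_swap f) by apply/ps_convP/geom_majorized_swap/ps_convP.
have hl' : ps_conv (ps_swap l) by apply/ps_convP/geom_majorized_swap/ps_convP.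
rewrite -ps_dvd_swap -[ps_dvd l (jac f l)]ps_dvd_swap.
rewrite -(ps_dvdN (ps_swap l) (ps_swap (jac f l))) -jac_swap.
by split; [apply: ps_dvd_jac | apply: ps_dvd_of_dvd_jac].
Qed.

End JacobianCriterion.

Theorem mainTheorem1 (R : realType) (f l : ps R) :
  ps_conv f -> ~ ps_eq f (ps_zero R) -> ps_at0 f = 0 -> ps_reduced f ->
  ps_conv l -> ps_ord1 l ->
  ps_at0 (jac f l) = 0 ->
  (~ ps_dvd l f <-> ~ ps_dvd l (jac f l)).
Proof.
move=> hf _ f00 _ hl hl1 _.
by have := ps_dvd_jacP hf f00 hl hl1; tauto.
Qed.
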